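(* Let $n\ge1$, let $\preceq$ be an admissible order on $L([0,1])$. Then: (i) for $F\colon L([0,1])^2\to L([0,1])$ with $F(X,\mathbf1)=X$ for all $X$ and $F$ non-decreasing in the second variable, the IV Sugeno-like $FG$-functional $\mathbf S_m^{F,\vee}$ is idempotent for every IV fuzzy measure $m$; (ii) for $G=\vee$ or $G=\mathrm{Proj}_1$, the functional $\mathbf S_m^{\wedge,G}$ is idempotent for every IV fuzzy measure $m$; (iii) $\mathbf S_m^{\wedge,\vee}$ is idempotent for every IV fuzzy measure $m$.
   Context: $N=\{1,\dots,n\}$. $L([0,1])=\{[a,b]:0\le a\le b\le1\}$, $\mathbf0=[0,0]$, $\mathbf1=[1,1]$. An admissible order $\preceq$ is a total order on $L([0,1])$ such that $[a,b]\preceq[c,d]$ whenever $a\le c$ and $b\le d$. $\vee,\wedge$ denote maximum and minimum w.r.t. $\preceq$; monotonicity is w.r.t. $\preceq$; $\mathrm{Proj}_1(X_1,\dots,X_n)=X_1$. Idempotent means $\mathbf S(X,\dots,X)=X$ for all $X$. An IV fuzzy measure w.r.t. $\preceq$ is $m\colon2^N\to L([0,1])$ with $m(\emptyset)=\mathbf0$, $m(N)=\mathbf1$, $m(A)\preceq m(B)$ for $A\subseteq B$. For a permutation $\sigma$, $E_{\sigma(i)}=\{\sigma(i),\dots,\sigma(n)\}$. The IV Sugeno-like $FG$-functional is $\mathbf S_m^{F,G}(X_1,\dots,X_n)=G\big(F(X_{\sigma(1)},m(E_{\sigma(1)})),\dots,F(X_{\sigma(n)},m(E_{\sigma(n)}))\big)$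 with $\sigma$ any permutation such that $X_{\sigma(1)}\preceq\dots\preceq X_{\sigma(n)}$; it is defined when this value is independent of the choice of $\sigma$ for all inputs. *)

From HB Require Import structures.
From mathcomp Require Import all_boot all_order all_algebra all_fingroup.
From mathcomp Require Import reals.
Set Implicit Arguments. Unset Strict Implicit. Unset Printing Implicit Defensive.
Import Order.TTheory GRing.Theory Num.Theory.
Local Open Scope ring_scope.

Section IVDefs.
Variable R : realType.

Record IV := mkIV { lo : R; hi : R; ivP : (0 <= lo) && (lo <= hi) && (hi <= 1) }.

Lemma iv0_proof : (0 <= 0 :> R) && (0 <= 0 :> R) && (0 <= 1 :> R).
Proof. by rewrite lexx ler01. Qed.
Lemma iv1_proof : (0 <= 1 :> R) && (1 <= 1 :> R) && (1 <= 1 :> R).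
Proof. by rewrite lexx ler01. Qed.

Definition iv0 : IV := mkIV iv0_proof.
Definition iv1 : IV := mkIV iv1_proof.

Definition admissible (le : IV -> IV -> bool) : Prop :=
  [/\ (forall X, le X X),
      (forall X Y, le X Y -> le Y X -> X = Y),
      (forall X Y Z, le X Y -> le Y Z -> le X Z),
      (forall X Y, le X Y || le Y X) &
      (forall X Y, lo X <= lo Y -> hi X <= hi Y -> le X Y)].

Definition ivmax (le : IV -> IV -> bool) (X Y : IV) : IV := if le X Y then Y else X.
Definition ivmin (le : IV -> IV -> bool) (X Y : IV) : IV := if le X Y then X else Y.

(* n-ary maximum w.r.t. le (iv0 is the bottom of any admissible order) *)
Definition ivMax (n : nat) (le : IV -> IV -> bool) (Y : 'I_n -> IV) : IV :=
  foldr (ivmax le) iv0 [seq Y i | i <- enum 'I_n].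

Definition Proj1 (n : nat) (hn : (0 < n)%N) (Y : 'I_n -> IV) : IV := Y (Ordinal hn).

Definition IVfuzzy_measure (n : nat) (le : IV -> IV -> bool) (m : {set 'I_n} -> IV) : Prop :=
  [/\ m set0 = iv0, m [set: 'I_n] = iv1 &
      (forall A B : {set 'I_n}, A \subset B -> le (m A) (m B))].

(* E_{sigma(i)} = {sigma(i), ..., sigma(n)} (positions are 0-based) *)
Definition Eset (n : nat) (s : 'S_n) (i : 'I_n) : {set 'I_n} :=
  [set s j | j in [pred j : 'I_n | (i <= j)%N]].

Definition sorting (n : nat) (le : IV -> IV -> bool) (s : 'S_n) (X : 'I_n -> IV) : Prop :=
  forall i j : 'I_n, (i <= j)%N -> le (X (s i)) (X (s j)).

Definition SFG_val (n : nat) (F : IV -> IV -> IV) (G : ('I_n -> IV) -> IV)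
  (m : {set 'I_n} -> IV) (s : 'S_n) (X : 'I_n -> IV) : IV :=
  G (fun i => F (X (s i)) (m (Eset s i))).

Definition SFG_defined (n : nat) (le : IV -> IV -> bool) (F : IV -> IV -> IV)
  (G : ('I_n -> IV) -> IV) (m : {set 'I_n} -> IV) : Prop :=
  forall (X : 'I_n -> IV) (s t : 'S_n), sorting le s X -> sorting le t X ->
    SFG_val F G m s X = SFG_val F G m t X.

Definition SFG_idempotent (n : nat) (le : IV -> IV -> bool) (F : IV -> IV -> IV)
  (G : ('I_n -> IV) -> IV) (m : {set 'I_n} -> IV) : Prop :=
  forall (X : IV) (s : 'S_n), sorting le s (fun _ => X) ->
    SFG_val F G m s (fun _ => X) = X.

End IVDefs.

From mathcomp Require Import all_boot all_order all_algebra all_fingroup.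
From mathcomp Require Import reals.
Set Implicit Arguments. Unset Strict Implicit. Unset Printing Implicit Defensive.
Import Order.TTheory.
Local Open Scope ring_scope.

(* For G = max: if s and t both sort X, every term (X_{s i}, E_{s i}) is
   dominated by a term (X_{t j}, E_{t j}) with the same value and a larger
   set, so monotonicity of F and m makes the two maxima equal.  On a constant
   input the first term is F(X, m(N)) = F(X, 1) = X, and all other terms are
   below F(X, 1).  For G = Proj_1 only the first term counts, and X_{s 0} is
   the minimum of X whatever the sorting permutation s. *)

Section AdmissibleOrder.
Variables (R : realType) (le : IV R -> IV R -> bool).
Hypothesis hle : admissible le.

Lemma adm_refl X : le X X. Proof. by case: hle => h _ _ _ _; apply: h. Qed.
Lemma adm_anti X Y : le X Y -> le Y X -> X = Y.
Proof. by case: hle => _ h _ _ _; apply: h. Qed.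
Lemma adm_trans X Y Z : le X Y -> le Y Z -> le X Z.
Proof. by case: hle => _ _ h _ _; apply: h. Qed.
Lemma adm_total X Y : le X Y || le Y X. Proof. by case: hle => _ _ _ h _; apply: h. Qed.

Lemma iv0_le X : le (iv0 R) X.
Proof.
case: hle => _ _ _ _ prod_le; case: X => a b abP.
have /andP[/andP[a_ge0 ab] _] := abP.
by apply: prod_le => //=; apply: le_trans ab.
Qed.

Lemma le_iv1 X : le X (iv1 R).
Proof.
case: hle => _ _ _ _ prod_le; case: X => a b abP.
have /andP[/andP[_ ab] b_le1] := abP.
by apply: prod_le => //=; apply: le_trans b_le1.
Qed.

Lemma le_ivmaxl X Y : le X (ivmax le X Y).
Proof. by rewrite /ivmax; case: ifP => // _; apply: adm_refl. Qed.

Lemma le_ivmaxr X Y : le Y (ivmax le X Y).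
Proof.
rewrite /ivmax; case: ifP => [_|XY]; first exact: adm_refl.
by move: (adm_total X Y); rewrite XY.
Qed.

Lemma le_ivMax n (Y : 'I_n -> IV R) i : le (Y i) (ivMax le Y).
Proof.
rewrite /ivMax; have : i \in enum 'I_n by rewrite mem_enum.
elim: (enum 'I_n) => //= a l IH; rewrite inE => /orP[/eqP->|/IH Yi_le].
  exact: le_ivmaxl.
exact: adm_trans Yi_le (le_ivmaxr _ _).
Qed.

Lemma ivMax_le n (Y : 'I_n -> IV R) Z :
  (forall i, le (Y i) Z) -> le (ivMax le Y) Z.
Proof.
move=> Y_le; rewrite /ivMax; elim: (enum 'I_n) => [|a l IH] /=.
  exact: iv0_le.
by rewrite /ivmax; case: ifP.
Qed.

Lemma ivmin_iv1 X : ivmin le X (iv1 R) = X.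
Proof. by rewrite /ivmin le_iv1. Qed.

Lemma ivmin_homor X Y Z : le Y Z -> le (ivmin le X Y) (ivmin le X Z).
Proof.
rewrite /ivmin => YZ; case: ifP => XY; case: ifP => XZ //.
- exact: adm_refl.
- by move: (adm_trans XY YZ); rewrite XZ.
- by move: (adm_total X Y); rewrite XY.
Qed.

Lemma Eset_first n (s : 'S_n) (i : 'I_n) :
  i = 0%N :> nat -> Eset s i = [set: 'I_n].
Proof.
move=> i0; apply/setP => x; rewrite inE -(permKV s x).
by apply: imset_f; rewrite inE i0.
Qed.

Lemma sorting_first_le n (hn : (0 < n)%N) (X : 'I_n -> IV R) (s : 'S_n) k :
  sorting le s X -> le (X (s (Ordinal hn))) (X k).
Proof. by move=> s_sorts; rewrite -(permKV s k); apply: s_sorts. Qed.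

Lemma sorting_first_eq n (hn : (0 < n)%N) (X : 'I_n -> IV R) (s t : 'S_n) :
  sorting le s X -> sorting le t X -> X (s (Ordinal hn)) = X (t (Ordinal hn)).
Proof. by move=> s_sorts t_sorts; apply: adm_anti; apply: sorting_first_le. Qed.

(* Take for j the first position in t whose value reaches X (s i). *)
Lemma sorting_Eset_dominated n (X : 'I_n -> IV R) (s t : 'S_n) i :
  sorting le s X -> sorting le t X ->
  exists j, X (t j) = X (s i) /\ Eset s i \subset Eset t j.
Proof.
move=> s_sorts t_sorts; set k := (t^-1)%g (s i).
pose reaches j := le (X (s i)) (X (t j)).
have reach_k : reaches k by rewrite /reaches /k permKV; apply: adm_refl.
have [j reach_j j_first] := @arg_minnP _ k reaches (@nat_of_ord n) reach_k.
exists j; split.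
  apply: adm_anti => //.
  by have := t_sorts _ _ (j_first _ reach_k); rewrite /k permKV.
apply/subsetP => y /imsetP[l]; rewrite inE => il ->.
rewrite -(permKV t (s l)); apply: imset_f; rewrite inE; apply: j_first.
by rewrite /reaches permKV; apply: s_sorts.
Qed.

Section FunctionalMax.
Variables (n : nat) (F : IV R -> IV R -> IV R) (m : {set 'I_n} -> IV R).
Hypothesis F_homor : forall X Y Z, le Y Z -> le (F X Y) (F X Z).

Lemma SFG_max_defined :
  (forall A B : {set 'I_n}, A \subset B -> le (m A) (m B)) ->
  SFG_defined le F (ivMax le) m.
Proof.
move=> m_homo X.
suff val_le s t : sorting le s X -> sorting le t X ->
    le (SFG_val F (ivMax le) m s X) (SFG_val F (ivMax le) m t X).
  by move=> s t s_sorts t_sorts; apply: adm_anti; apply: val_le.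
move=> s_sorts t_sorts; apply: ivMax_le => i.
have [j [Xtj sub]] := sorting_Eset_dominated i s_sorts t_sorts.
by apply: adm_trans (le_ivMax _ j) => /=; rewrite Xtj; apply/F_homor/m_homo.
Qed.

Lemma SFG_max_idempotent : (0 < n)%N ->
  (forall X, F X (iv1 R) = X) -> m [set: 'I_n] = iv1 R ->
  SFG_idempotent le F (ivMax le) m.
Proof.
move=> hn F_iv1 mT X s _; apply: adm_anti.
  by apply: ivMax_le => i; rewrite -{2}(F_iv1 X); apply/F_homor/le_iv1.
have := le_ivMax (fun i => F X (m (Eset s i))) (Ordinal hn).
by rewrite /= Eset_first // mT F_iv1.
Qed.

Lemma SFG_max_defined_idempotent : (0 < n)%N ->
  (forall X, F X (iv1 R) = X) -> IVfuzzy_measure le m ->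
  SFG_defined le F (ivMax le) m /\ SFG_idempotent le F (ivMax le) m.
Proof.
move=> hn F_iv1 [_ mT m_homo].
by split; [exact: SFG_max_defined | exact: SFG_max_idempotent].
Qed.

End FunctionalMax.

Section FunctionalProj1.
Variables (n : nat) (hn : (0 < n)%N) (F : IV R -> IV R -> IV R).
Variable m : {set 'I_n} -> IV R.
Hypotheses (F_iv1 : forall X, F X (iv1 R) = X) (mT : m [set: 'I_n] = iv1 R).

Lemma SFG_val_Proj1 s X : SFG_val F (Proj1 hn) m s X = X (s (Ordinal hn)).
Proof. by rewrite /SFG_val /Proj1 Eset_first // mT F_iv1. Qed.

Lemma SFG_Proj1_defined : SFG_defined le F (Proj1 hn) m.
Proof.
by move=> X s t s_sorts t_sorts; rewrite !SFG_val_Proj1; apply: sorting_first_eq.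
Qed.

Lemma SFG_Proj1_idempotent : SFG_idempotent le F (Proj1 hn) m.
Proof. by move=> X s _; rewrite SFG_val_Proj1. Qed.

End FunctionalProj1.

Lemma SFG_Proj1_defined_idempotent n (hn : (0 < n)%N) F (m : {set 'I_n} -> IV R) :
  (forall X, F X (iv1 R) = X) -> IVfuzzy_measure le m ->
  SFG_defined le F (Proj1 hn) m /\ SFG_idempotent le F (Proj1 hn) m.
Proof.
move=> F_iv1 [_ mT _].
by split; [exact: SFG_Proj1_defined | exact: SFG_Proj1_idempotent].
Qed.

End AdmissibleOrder.

Theorem corollary2 (R : realType) (n : nat) (hn : (0 < n)%N)
  (le : IV R -> IV R -> bool) (hle : admissible le) :
  (* (i) *)
  (forall F : IV R -> IV R -> IV R,
     (forall X, F X (iv1 R) = X) ->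
     (forall X Y Z, le Y Z -> le (F X Y) (F X Z)) ->
     forall m : {set 'I_n} -> IV R, IVfuzzy_measure le m ->
       SFG_defined le F (ivMax le) m /\ SFG_idempotent le F (ivMax le) m)
  /\
  (* (ii) *)
  (forall G : ('I_n -> IV R) -> IV R,
     (G = ivMax le \/ G = Proj1 hn) ->
     forall m : {set 'I_n} -> IV R, IVfuzzy_measure le m ->
       SFG_defined le (ivmin le) G m /\ SFG_idempotent le (ivmin le) G m)
  /\
  (* (iii) *)
  (forall m : {set 'I_n} -> IV R, IVfuzzy_measure le m ->
     SFG_defined le (ivmin le) (ivMax le) m /\
     SFG_idempotent le (ivmin le) (ivMax le) m).
Proof.
have min_iv1 := ivmin_iv1 hle; have min_homor := ivmin_homor hle.
split; last split.
- by move=> F F_iv1 F_homor m; apply: SFG_max_defined_idempotent.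
- move=> G [->|->] m; first exact: SFG_max_defined_idempotent.
  exact: SFG_Proj1_defined_idempotent.
- by move=> m; apply: SFG_max_defined_idempotent.
Qed.
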